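(* Assume (A1), (A2), (A3) below, let $r\in\mathcal R_\epsilon$, $x_0\in\mathcal D_x(r)$, let $p$ be the fixed planned path, and consider the closed-loop PathFG+MPC trajectory $s_{k+1}=g(\xi^*_{N|k})$, $x_{k+1}=f(x_k,\tilde\kappa(x_k,s_k))$, where $\xi^*_{N|k}=\tilde\xi_N^*(x_k,s_k)$. Then there exist $\delta>0$ and $\alpha>0$ such that for every $k$ with $\|\xi^*_{N|k}-\tilde x_{s_k}\|\le\delta$ (i.e. $(\xi^*_{N|k},p(s_k))\in\mathcal B_\delta(\Sigma)$): $s_{k+1}-s_k\ge\alpha$ if $1-s_k>\alpha$, and $s_{k+1}=1$ if $1-s_k\le\alpha$.
   Context: System: $x_{k+1}=f(x_k,u_k)$, $x_k\in\mathbb R^{n_x}$, $u_k\in\mathbb R^{n_u}$, with $\mathcal X=\{x:h_x(x)\le0\}$, $\mathcal U=\{u:h_u(u)\le0\}$. (A1) $f$ is locally Lipschitz, $h_x,h_u$ are continuous, and there are a set $\mathcal R\subseteq\mathbb R^{n_r}$ and continuous maps $r\mapsto\bar x_r\in\mathcal X$, $r\mapsto\bar u_r\in\mathcal U$ with $\bar x_r=f(\bar x_r,\bar u_r)$. For fixed $\epsilon>0$, $\mathcal R_\epsilon=\{r\in\mathcal R:h_x(\bar x_r)\le-\epsilon,\ h_u(\bar u_r)\le-\epsilon\}$. MPC: horizon $N\in\mathbb N_{>0}$, stage cost $\ell:\mathcal X\times\mathcal U\times\mathcal R_\epsilon\to\mathbb R_{\ge0}$, terminal set $\mathcal T\subseteq\mathcal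 X\times\mathcal R$, terminal cost $V:\mathcal T\to\mathbb R_{\ge0}$. The OCP at $(x,r)$: minimize $V(\xi_N,r)+\sum_{i=0}^{N-1}\ell(\xi_i,\mu_i,r)$ subject to $\xi_0=x$, $\xi_{i+1}=f(\xi_i,\mu_i)$, $\xi_i\in\mathcal X$, $\mu_i\in\mathcal U$ ($i=0,\dots,N-1$), $(\xi_N,r)\in\mathcal T$. $\Gamma=\{(x,r)\in\mathcal X\times\mathcal R_\epsilon:$ OCP feasible$\}$; $\zeta^*(x,r)=(\xi_0^*,\dots,\xi_N^*,\mu_0^*,\dots,\mu_{N-1}^* )$ is the minimizer (treated as a function), $\xi_N^*(x,r)$ its final state, $\kappa(x,r)=\mu_0^*(x,r)$. (A2) (a) $\ell$ uniformly continuous, $\ell(\bar x_r,\bar u_r,r)=0$, $\ell(x,u,r)\ge\gamma_\ell(\|x-\bar x_r\|)$ for some $\gamma_\ell\in\mathcal K_\infty$, all $(x,r)\in\Gamma$, $u\in\mathcal U$. (b) $V$ uniformly continuous, $V(\bar x_r,r)=0$, $V\ge0$ on $\mathcal T$, and some $\kappa_T:\mathcal T\to\mathcal U$ satisfies $V(f(x,\kappa_T(x,r)),r)-V(x,r)\le-\ell(x,\kappa_T(x,r),r)$ on $\mathcal T$. (c) $(x,r)\in\mathcal T\Rightarrow(f(x,\kappa_T(x,r)),r)\in\mathcal T$, $x\in\mathcal X$, $\kappa_T(x,r)\in\mathcal U$. (d) $(\bar x_r,r)\in\operatorname{int}\mathcal T$ for all $r\in\mathcal R_\epsilon$. (e)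 $\zeta^*$ is Lipschitz continuous. Paths: a feasible path for $(x_0,r)$, $r\in\mathcal R_\epsilon$, is $\{p(s):s\in[0,1]\}$ with $p:[0,1]\to\mathcal R_\epsilon$ continuous, $(x_0,p(0))\in\Gamma$, $p(1)=r$; $\mathcal D_x(r)$ is the set of $x_0$ for which such a path exists. (A3) For such $(x_0,r)$ the planner returns a feasible path. With $p$ fixed: $\tilde x_s=\bar x_{p(s)}$, $\tilde{\mathcal T}=\{(x,s):(x,p(s))\in\mathcal T\}$, $\tilde\xi_N^*(x,s)=\xi_N^*(x,p(s))$, $\tilde\kappa(x,s)=\kappa(x,p(s))$, and $g(\xi)=\max\{s\in[0,1]:(\xi,s)\in\tilde{\mathcal T}\}$. $\Sigma=\{(\tilde x_s,p(s)):s\in[0,1]\}$ and $\mathcal B_\delta(\Sigma)=\{(x,p(s)):\|x-\tilde x_s\|\le\delta,\ s\in[0,1]\}$. *)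

From mathcomp Require Import all_boot all_order all_algebra.
From mathcomp Require Import reals.
Set Implicit Arguments. Unset Strict Implicit. Unset Printing Implicit Defensive.
Import Order.TTheory GRing.Theory Num.Theory.
Local Open Scope ring_scope.

Section Defs.
Variable R : realType.

Definition enorm (n : nat) (v : 'rV[R]_n) : R :=
  Num.sqrt (\sum_(i < n) (v ord0 i) ^+ 2).

Definition vle (m : nat) (v : 'rV[R]_m) (c : R) : Prop := forall i, v ord0 i <= c.

Definition K_inf (g : R -> R) : Prop :=
  g 0 = 0 /\
  (forall a b, 0 <= a -> a < b -> g a < g b) /\
  (forall a, 0 <= a -> forall e, 0 < e -> exists2 d, 0 < d &
      forall b, 0 <= b -> `|a - b| < d -> `|g a - g b| < e) /\
  (forall M, exists a, 0 <= a /\ M < g a).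

Definition vcontinuous (n m : nat) (h : 'rV[R]_n -> 'rV[R]_m) : Prop :=
  forall x e, 0 < e -> exists2 d, 0 < d &
    forall y, enorm (x - y) < d -> enorm (h x - h y) < e.

Definition vcontinuous_on (n m : nat) (D : 'rV[R]_n -> Prop)
    (h : 'rV[R]_n -> 'rV[R]_m) : Prop :=
  forall x, D x -> forall e, 0 < e -> exists2 d, 0 < d &
    forall y, D y -> enorm (x - y) < d -> enorm (h x - h y) < e.

Definition loc_lipschitz (nx nu : nat) (f : 'rV[R]_nx -> 'rV[R]_nu -> 'rV[R]_nx) :=
  forall x u, exists e, exists L, 0 < e /\ forall x1 u1 x2 u2,
    enorm (x1 - x) + enorm (u1 - u) < e -> enorm (x2 - x) + enorm (u2 - u) < e ->
    enorm (f x1 u1 - f x2 u2) <= L * (enorm (x1 - x2) + enorm (u1 - u2)).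

Section MPC.
Variables (nx nu nr mx mu : nat).
Variable f : 'rV[R]_nx -> 'rV[R]_nu -> 'rV[R]_nx.
Variables (hx : 'rV[R]_nx -> 'rV[R]_mx) (hu : 'rV[R]_nu -> 'rV[R]_mu).
Variable Rset : 'rV[R]_nr -> Prop.
Variables (xbar : 'rV[R]_nr -> 'rV[R]_nx) (ubar : 'rV[R]_nr -> 'rV[R]_nu).
Variable eps : R.

Definition Xset (x : 'rV[R]_nx) : Prop := vle (hx x) 0.
Definition Uset (u : 'rV[R]_nu) : Prop := vle (hu u) 0.

Definition A1 : Prop :=
  loc_lipschitz f /\ vcontinuous hx /\ vcontinuous hu /\
  vcontinuous_on Rset xbar /\ vcontinuous_on Rset ubar /\
  (forall r, Rset r -> Xset (xbar r) /\ Uset (ubar r) /\ xbar r = f (xbar r) (ubar r)).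

Definition Reps (r : 'rV[R]_nr) : Prop :=
  Rset r /\ vle (hx (xbar r)) (- eps) /\ vle (hu (ubar r)) (- eps).

Variable N : nat.
Variable ell : 'rV[R]_nx -> 'rV[R]_nu -> 'rV[R]_nr -> R.
Variable Tset : 'rV[R]_nx -> 'rV[R]_nr -> Prop.
Variable V : 'rV[R]_nx -> 'rV[R]_nr -> R.

(* A candidate of the OCP: state sequence xi_0..xi_N, input sequence mu_0..mu_{N-1} *)
Definition traj : Type := ((nat -> 'rV[R]_nx) * (nat -> 'rV[R]_nu))%type.

Definition ocp_feasible (x : 'rV[R]_nx) (r : 'rV[R]_nr) (z : traj) : Prop :=
  z.1 0%N = x /\
  (forall i, (i < N)%N ->
     z.1 i.+1 = f (z.1 i) (z.2 i) /\ Xset (z.1 i) /\ Uset (z.2 i)) /\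
  Tset (z.1 N) r.

Definition ocp_cost (r : 'rV[R]_nr) (z : traj) : R :=
  V (z.1 N) r + \sum_(i < N) ell (z.1 i) (z.2 i) r.

Definition Gamma (x : 'rV[R]_nx) (r : 'rV[R]_nr) : Prop :=
  Xset x /\ Reps r /\ exists z, ocp_feasible x r z.

Definition is_minimizer (zeta : 'rV[R]_nx -> 'rV[R]_nr -> traj) : Prop :=
  forall x r, Gamma x r ->
    ocp_feasible x r (zeta x r) /\
    forall z, ocp_feasible x r z -> ocp_cost r (zeta x r) <= ocp_cost r z.

Definition in_int_T (x : 'rV[R]_nx) (r : 'rV[R]_nr) : Prop :=
  exists2 e, 0 < e & forall x' r', enorm (x' - x) + enorm (r' - r) < e -> Tset x' r'.

Definition A2 (zeta : 'rV[R]_nx -> 'rV[R]_nr -> traj) : Prop :=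
  (forall x u r, Xset x -> Uset u -> Reps r -> 0 <= ell x u r) /\
  (forall e, 0 < e -> exists2 d, 0 < d & forall x u r x' u' r',
     Xset x -> Uset u -> Reps r -> Xset x' -> Uset u' -> Reps r' ->
     enorm (x - x') + enorm (u - u') + enorm (r - r') < d ->
     `|ell x u r - ell x' u' r'| < e) /\
  (forall r, Reps r -> ell (xbar r) (ubar r) r = 0) /\
  (exists gl, K_inf gl /\ forall x r u, Gamma x r -> Uset u ->
     gl (enorm (x - xbar r)) <= ell x u r) /\
  (forall e, 0 < e -> exists2 d, 0 < d & forall x r x' r',
     Tset x r -> Tset x' r' -> enorm (x - x') + enorm (r - r') < d ->
     `|V x r - V x' r'| < e) /\
  (forall r, Reps r -> V (xbar r) r = 0) /\
  (forall x r, Tset x r -> 0 <= V x r) /\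
  (exists kT : 'rV[R]_nx -> 'rV[R]_nr -> 'rV[R]_nu,
     forall x r, Tset x r ->
       V (f x (kT x r)) r - V x r <= - ell x (kT x r) r /\
       Tset (f x (kT x r)) r /\ Xset x /\ Uset (kT x r)) /\
  (forall r, Reps r -> in_int_T (xbar r) r) /\
  (exists L, forall x r x' r', Gamma x r -> Gamma x' r' ->
     \sum_(i < N.+1) enorm ((zeta x r).1 i - (zeta x' r').1 i) +
     \sum_(i < N) enorm ((zeta x r).2 i - (zeta x' r').2 i)
     <= L * (enorm (x - x') + enorm (r - r'))).

Definition feasible_path (x0 : 'rV[R]_nx) (r : 'rV[R]_nr) (p : R -> 'rV[R]_nr) : Prop :=
  (forall s, 0 <= s <= 1 -> forall e, 0 < e -> exists2 d, 0 < d &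
     forall s', 0 <= s' <= 1 -> `|s - s'| < d -> enorm (p s - p s') < e) /\
  (forall s, 0 <= s <= 1 -> Reps (p s)) /\
  Gamma x0 (p 0) /\ p 1 = r.

Definition Dx (r : 'rV[R]_nr) (x0 : 'rV[R]_nx) : Prop :=
  exists p, feasible_path x0 r p.

Definition is_g (p : R -> 'rV[R]_nr) (xi : 'rV[R]_nx) (s' : R) : Prop :=
  (0 <= s' <= 1) /\ Tset xi (p s') /\
  (forall s, 0 <= s <= 1 -> Tset xi (p s) -> s <= s').

End MPC.
End Defs.

From mathcomp Require Import all_boot all_order all_algebra.
From mathcomp Require Import reals.
From mathcomp Require Import ring lra.
From mathcomp Require Import classical_sets topology normedtype.
Set Implicit Arguments. Unset Strict Implicit. Unset Printing Implicit Defensive.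
Import Order.TTheory GRing.Theory Num.Theory.
Import numFieldNormedType.Exports.
Local Open Scope classical_set_scope.
Local Open Scope ring_scope.

(* By (A2d) every point (xbar (p s), p s) of the reference curve lies in the
   interior of the terminal set.  The curve is the continuous image of the
   compact interval [0, 1], so the interior radius can be chosen uniformly:
   there is one e > 0 such that (xi, p t) is terminal whenever xi is e-close
   to xbar (p s) and |t - s| <= e.  Since g(xi) is the largest admissible path
   parameter, it is then at least min (s + e, 1), and delta = alpha = e. *)

Section EuclideanNorm.
Variable R : realType.

Lemma cauchy_schwarz n (a b : 'I_n -> R) :
  (\sum_i a i * b i) ^+ 2 <= (\sum_i a i ^+ 2) * (\sum_i b i ^+ 2).
Proof.
rewrite -subr_ge0 -(pmulr_rge0 _ (ltr0n R 2)).
(* Lagrange's identity *)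
have -> : 2 * ((\sum_i a i ^+ 2) * (\sum_i b i ^+ 2) - (\sum_i a i * b i) ^+ 2)
    = \sum_i \sum_j (a i * b j - a j * b i) ^+ 2.
  have -> : \sum_i \sum_j (a i * b j - a j * b i) ^+ 2 =
      \sum_i \sum_j (a i ^+ 2 * b j ^+ 2) + \sum_i \sum_j (a j ^+ 2 * b i ^+ 2)
      - 2 * \sum_i \sum_j (a i * b i * (a j * b j)).
    rewrite mulr_sumr -big_split -sumrB /=; apply: eq_bigr => i _.
    rewrite mulr_sumr -big_split -sumrB /=; apply: eq_bigr => j _.
    ring.
  rewrite [X in _ + X - _]exchange_big /= expr2 !big_distrl /= mulrBr.
  congr (_ - _); last first.
    by congr (_ * _); apply: eq_bigr => i _; rewrite big_distrr.
  by rewrite mulr_natl mulr2n; congr (_ + _); apply: eq_bigr => i _;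
    rewrite big_distrr.
by apply: sumr_ge0 => i _; apply: sumr_ge0 => j _; exact: sqr_ge0.
Qed.

Lemma enormN n (v : 'rV[R]_n) : enorm (- v) = enorm v.
Proof. by congr Num.sqrt; apply: eq_bigr => i _; rewrite mxE sqrrN. Qed.

Lemma enorm_distC n (u v : 'rV[R]_n) : enorm (u - v) = enorm (v - u).
Proof. by rewrite -enormN opprB. Qed.

Lemma ler_enormD n (u v : 'rV[R]_n) : enorm (u + v) <= enorm u + enorm v.
Proof.
rewrite /enorm.
set A := \sum_(i < n) u ord0 i ^+ 2; set B := \sum_(i < n) v ord0 i ^+ 2.
have A_ge0 : 0 <= A by apply: sumr_ge0 => i _; exact: sqr_ge0.
have B_ge0 : 0 <= B by apply: sumr_ge0 => i _; exact: sqr_ge0.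
have -> : \sum_(i < n) (u + v) ord0 i ^+ 2 =
    A + B + 2 * \sum_(i < n) u ord0 i * v ord0 i.
  rewrite /A /B -big_split mulr_sumr -big_split; apply: eq_bigr => i _ /=.
  by rewrite mxE; ring.
have uv_le : \sum_(i < n) u ord0 i * v ord0 i <= Num.sqrt A * Num.sqrt B.
  rewrite -sqrtrM //; apply: le_trans (ler_norm _) _.
  by rewrite -sqrtr_sqr ler_sqrt ?mulr_ge0 //; exact: cauchy_schwarz.
rewrite -(ger0_norm (addr_ge0 (sqrtr_ge0 A) (sqrtr_ge0 B))) -sqrtr_sqr.
by rewrite ler_sqrt ?sqr_ge0 // sqrrD !sqr_sqrtr //; lra.
Qed.

Lemma ler_enorm_distD n (a b c : 'rV[R]_n) :
  enorm (a - c) <= enorm (a - b) + enorm (b - c).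
Proof. by have := ler_enormD (a - b) (b - c); rewrite addrA subrK. Qed.

End EuclideanNorm.

Lemma compact_uniform_radius (R : realType) (K : set R) (P : R -> R -> Prop) :
  compact K ->
  (forall s, K s -> exists2 c, 0 < c &
     forall e s', K s' -> `|s' - s| < c -> 0 < e < c -> P e s') ->
  exists2 e, 0 < e & forall s, K s -> P e s.
Proof.
move=> /compact_near_coveringP/near_covering_withinP K_cover loc.
have : \forall e \near 0^'+, K `<=` P e.
  apply: K_cover => s /loc[c c_gt0 Pc].
  exists (ball s c, [set e | 0 < e < c]) => [|[s' e] [/= s's e_range] Ks'].
    split; first exact: nbhsx_ballx.
    near=> e; apply/andP; split; near: e;
      [exact: nbhs_right_gt | exact: nbhs_right_lt].
  by apply: Pc => //; rewrite -ball_normE /= distrC in s's.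
move=> KP; have [e [e_gt0 Pe]] := filter_ex (filterI (nbhs_right_gt 0) KP).
by exists e.
Unshelve. all: by end_near.
Qed.

Section Paths.
Variable R : realType.

Definition path_continuous n (q : R -> 'rV[R]_n) : Prop :=
  forall s, 0 <= s <= 1 -> forall e, 0 < e -> exists2 d, 0 < d &
    forall s', 0 <= s' <= 1 -> `|s - s'| < d -> enorm (q s - q s') < e.

Lemma path_continuous_comp n m (D : 'rV[R]_n -> Prop) (h : 'rV[R]_n -> 'rV[R]_m)
    (q : R -> 'rV[R]_n) :
  vcontinuous_on D h -> (forall s, 0 <= s <= 1 -> D (q s)) ->
  path_continuous q -> path_continuous (h \o q).
Proof.
move=> h_cont qD q_cont s s01 e e_gt0.
have [d d_gt0 hd] := h_cont _ (qD s s01) e e_gt0.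
have [d' d'_gt0 qd'] := q_cont s s01 d d_gt0.
by exists d' => // s' s'01 ss'; apply: hd; [exact: qD | exact: qd'].
Qed.

Lemma uniform_tube_in_interior nx nr (T : 'rV[R]_nx -> 'rV[R]_nr -> Prop)
    (c : R -> 'rV[R]_nx) (q : R -> 'rV[R]_nr) :
  path_continuous c -> path_continuous q ->
  (forall s, 0 <= s <= 1 -> in_int_T T (c s) (q s)) ->
  exists2 e, 0 < e & forall s t xi, 0 <= s <= 1 -> 0 <= t <= 1 ->
    `|t - s| <= e -> enorm (xi - c s) <= e -> T xi (q t).
Proof.
move=> c_cont q_cont c_int.
have [e e_gt0 tube] : exists2 e, 0 < e & forall s, `[0, 1]%classic s ->
    forall t xi, 0 <= t <= 1 -> `|t - s| <= e -> enorm (xi - c s) <= e -> T xi (q t).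
  apply: compact_uniform_radius; first exact: segment_compact.
  move=> s0; rewrite /= in_itv /= => s0_01.
  have [E E_gt0 int_E] := c_int s0 s0_01.
  have E4_gt0 : 0 < E / 4 by rewrite divr_gt0.
  have [dc dc_gt0 c_dc] := c_cont s0 s0_01 _ E4_gt0.
  have [dq dq_gt0 q_dq] := q_cont s0 s0_01 _ E4_gt0.
  pose rho := Num.min (Num.min dc (dq / 2)) (E / 4).
  exists rho; first by rewrite !lt_min dc_gt0 E4_gt0 divr_gt0.
  move=> e s; rewrite /= in_itv /= => s01 s_s0 /andP[e_gt0 e_lt] t xi t01 t_s xi_s.
  have [rho_dc rho_dq rho_E] : [/\ rho <= dc, rho <= dq / 2 & rho <= E / 4].
    by rewrite !ge_min !lexx !orbT.
  have t_s0 : `|s0 - t| < dq.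
    have := ler_distD s s0 t; rewrite (distrC s0 s) (distrC s t); lra.
  have c_s0 : enorm (c s0 - c s) < E / 4 by apply: c_dc; rewrite // distrC; lra.
  have q_t : enorm (q t - q s0) < E / 4 by rewrite enorm_distC; exact: q_dq.
  have := ler_enorm_distD xi (c s) (c s0); rewrite (enorm_distC (c s)) => xi_s0.
  by apply: int_E; lra.
by exists e => // s t xi s01; apply: tube; rewrite /= in_itv.
Qed.

Lemma is_g_progress nx nr (T : 'rV[R]_nx -> 'rV[R]_nr -> Prop)
    (p : R -> 'rV[R]_nr) (xi : 'rV[R]_nx) (e s s' : R) :
  0 <= e -> 0 <= s <= 1 ->
  (forall t, 0 <= t <= 1 -> `|t - s| <= e -> T xi (p t)) ->
  is_g T p xi s' ->
  (1 - s > e -> s' - s >= e) /\ (1 - s <= e -> s' = 1).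
Proof.
move=> e_ge0 /andP[s_ge0 s_le1] T_near [/andP[_ s'_le1] [_ s'_max]].
split=> [s_far | s_close].
- have t01 : 0 <= s + e <= 1 by apply/andP; split; lra.
  have := s'_max _ t01 (T_near _ t01 _); rewrite addrAC subrr add0r ger0_norm //.
  by move=> /(_ (lexx e)); lra.
- have t01 : 0 <= (1 : R) <= 1 by rewrite ler01 lexx.
  have := s'_max _ t01 (T_near _ t01 _); rewrite ger0_norm ?subr_ge0 //.
  by move=> /(_ s_close) s'_ge1; apply/eqP; rewrite eq_le s'_le1 s'_ge1.
Qed.

End Paths.

Theorem lemma6 (R : realType) (nx nu nr mx mu : nat)
  (f : 'rV[R]_nx -> 'rV[R]_nu -> 'rV[R]_nx)
  (hx : 'rV[R]_nx -> 'rV[R]_mx) (hu : 'rV[R]_nu -> 'rV[R]_mu)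
  (Rset : 'rV[R]_nr -> Prop)
  (xbar : 'rV[R]_nr -> 'rV[R]_nx) (ubar : 'rV[R]_nr -> 'rV[R]_nu)
  (eps : R) (N : nat)
  (ell : 'rV[R]_nx -> 'rV[R]_nu -> 'rV[R]_nr -> R)
  (Tset : 'rV[R]_nx -> 'rV[R]_nr -> Prop)
  (V : 'rV[R]_nx -> 'rV[R]_nr -> R)
  (zeta : 'rV[R]_nx -> 'rV[R]_nr -> traj R nx nu)
  (r : 'rV[R]_nr) (x0 : 'rV[R]_nx) (p : R -> 'rV[R]_nr)
  (x : nat -> 'rV[R]_nx) (s : nat -> R) :
  0 < eps -> (0 < N)%N ->
  A1 f hx hu Rset xbar ubar ->
  is_minimizer f hx hu Rset xbar ubar eps N ell Tset V zeta ->
  A2 f hx hu Rset xbar ubar eps N ell Tset V zeta ->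
  Reps hx hu Rset xbar ubar eps r ->
  Dx f hx hu Rset xbar ubar eps N Tset r x0 ->
  (* (A3): p is the feasible path returned by the planner *)
  feasible_path f hx hu Rset xbar ubar eps N Tset x0 r p ->
  (* closed loop PathFG+MPC *)
  x 0%N = x0 -> s 0%N = 0 ->
  (forall k, is_g Tset p ((zeta (x k) (p (s k))).1 N) (s k.+1)) ->
  (forall k, x k.+1 = f (x k) ((zeta (x k) (p (s k))).2 0%N)) ->
  exists delta alpha, 0 < delta /\ 0 < alpha /\
    forall k, enorm ((zeta (x k) (p (s k))).1 N - xbar (p (s k))) <= delta ->
      (1 - s k > alpha -> s k.+1 - s k >= alpha) /\
      (1 - s k <= alpha -> s k.+1 = 1).
Proof.
move=> _ _ [_ [_ [_ [xbar_cont _]]]] _ hA2 _ _ [p_cont [p_Reps _]] _ s0 s_next _.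
have xbar_int : forall s, 0 <= s <= 1 -> in_int_T Tset (xbar (p s)) (p s).
  by case: hA2 => _ [_ [_ [_ [_ [_ [_ [_ [int_T _]]]]]]]] t t01;
  apply: int_T; exact: p_Reps.
have xbar_p_cont : path_continuous (xbar \o p).
  by apply: (path_continuous_comp xbar_cont) p_cont => t /p_Reps[].
have [e e_gt0 tube] := uniform_tube_in_interior xbar_p_cont p_cont xbar_int.
have s01 : forall k, 0 <= s k <= 1.
  by case=> [|k]; [rewrite s0 lexx ler01 | case: (s_next k)].
exists e, e; do 2!split=> //; move=> k xi_near.
apply: is_g_progress (ltW e_gt0) (s01 k) _ (s_next k) => t t01 t_near.
exact: tube (s01 k) t01 t_near xi_near.
Qed.
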